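(* Let $k\in[0,1)$, $k'=\sqrt{1-k^2}$ and $k^*=ik/k'$ (so $(k^* )^2=-k^2/(1-k^2)\le0$ and ${k^*}'=\sqrt{1-(k^* )^2}=1/k'$). Then for every $\bar\theta\in(0,\pi/2)$, $$\sinh\big(2J(\bar\theta|k)\big)\,\sinh\Big(2J\Big(\frac\pi2-\bar\theta\,\Big|\,k^*\Big)\Big)=1.$$ Consequently the high-temperature expansion of the $Z$-invariant Ising model on an isoradial graph $G$ with modulus $k$ and the low-temperature expansion of the $Z$-invariant Ising model on the dual isoradial graph $G^*$ with modulus $k^*$ induce the same measure on polygon configurations of $G$.
   Context: $J(\bar\theta|k)=\frac12\log\frac{1+\mathrm{sn}(\theta|k)}{\mathrm{cn}(\theta|k)}$ with $\theta=\frac{2K(k)}{\pi}\bar\theta$, $K(k)=\int_0^{\pi/2}(1-k^2\sin^2t)^{-1/2}dt$, and $\mathrm{sn},\mathrm{cn}$ the Jacobi elliptic functions of modulus $k$ (equivalently $\sinh(2J(\bar\theta|k))=\mathrm{sc}(\theta|k)$). In the isoradial dual $G^*$, the dual edge $e^*$ of an edge $e$ with rhombus half-angle $\bar\theta_e$ has rhombus half-angle $\frac\pi2-\bar\theta_e$. Polygon configurations are edge subsets with even degree at every vertex; the high-temperature expansion weights a polygon configuration by $\prod_{e}\tanh J_e$, the low-temperature expansion of the dual model (via domain walls) by $\prod_{e}e^{-2J_{e^*}}$. *)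

From Stdlib Require Import Reals ClassicalEpsilon.
From mathcomp Require Import all_boot.

Set Implicit Arguments.
Unset Strict Implicit.
Unset Printing Implicit Defensive.

Local Open Scope R_scope.

(** Jacobi elliptic functions, parameterized by the PARAMETER m = k^2
    (a real number m < 1; for the imaginary modulus kstar = i k / k' one has
    m = kstar^2 = - k^2 / (1 - k^2) <= 0, and sn, cn, K are real). *)

Definition ell_integrand (m : R) (t : R) : R := / sqrt (1 - m * (sin t)^2).

Definition EllF (m phi : R) : R :=
  epsilon (inhabits (0 : R))
    (fun v : R => exists pr : Riemann_integrable (ell_integrand m) (0 : R) phi,
                RiemannInt pr = v).

Definition EllK (m : R) : R := EllF m (PI / 2).

Definition JacobiAm (m u : R) : R :=
  epsilon (inhabits (0 : R)) (fun phi : R => EllF m phi = u).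

Definition JacobiSn (m u : R) : R := sin (JacobiAm m u).
Definition JacobiCn (m u : R) : R := cos (JacobiAm m u).

Definition Jcoupling (thetabar m : R) : R :=
  let theta := 2 * EllK m / PI * thetabar in
  / 2 * ln ((1 + JacobiSn m theta) / JacobiCn m theta).

Definition degree_in (V E : finType) (ends : E -> V * V) (S : {set E}) (v : V) : nat :=
  (#|[set e in S | (ends e).1 == v]| + #|[set e in S | (ends e).2 == v]|)%N.

Definition polygon_config (V E : finType) (ends : E -> V * V) (S : {set E}) : bool :=
  [forall v : V, ~~ odd (degree_in ends S v)].

Definition ht_weight (E : finType) (theta : E -> R) (m : R) (S : {set E}) : R :=
  \big[Rmult/1]_(e in S) tanh (Jcoupling (theta e) m).

(* low-temperature weight of S for the dual model with parameter m:
   prod_{e in S} exp (-2 J_{e*}), with dual half-angle pi/2 - theta_e *)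
Definition lt_dual_weight (E : finType) (theta : E -> R) (m : R) (S : {set E}) : R :=
  \big[Rmult/1]_(e in S) exp (-2 * Jcoupling (PI / 2 - theta e) m).

Definition polygon_measure (V E : finType) (ends : E -> V * V)
    (w : {set E} -> R) (S : {set E}) : R :=
  w S / \big[Rplus/0]_(T : {set E} | polygon_config ends T) w T.

(** Replacing [t] by [pi/2 - t] in the elliptic integrand turns the parameter
    [m] into its imaginary-modulus transform [n = -m/(1-m)] up to the factor
    [k' = sqrt (1-m)], because [1 - n cos^2 t = (1 - m sin^2 t) / (1 - m)].
    Hence [F(pi/2 - phi | n) = k' (K(m) - F(phi | m))], so [K(n) = k' K(m)]
    and the amplitude of the dual model at [pi/2 - thetabar] is the complement
    [pi/2 - phi] of the amplitude [phi] of the original model at [thetabar].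
    Since [sinh (2 J) = sn/cn = tan phi], the product of the two sinh's is
    [tan phi * cot phi = 1]; equivalently [tanh J = exp (-2 J_dual)] for an edge
    and its dual, so the high- and low-temperature weights agree edge by edge. *)

From Stdlib Require Import Reals ClassicalEpsilon Lra FunctionalExtensionality.
From Coquelicot Require Import Coquelicot.

Local Open Scope R_scope.

Section EllipticIntegral.

Variable m : R.
Hypothesis m_lt1 : m < 1.

Lemma ell_denom_pos t : 0 < 1 - m * sin t ^ 2.
Proof.
  assert (sin t ^ 2 <= 1) by (pose proof (SIN_bound t); nra).
  assert (0 <= sin t ^ 2 * (1 - m)) by (apply Rmult_le_pos; [apply pow2_ge_0 | lra]).
  destruct (Rle_lt_dec 1 (sin t ^ 2)); nra.
Qed.

Lemma ell_integrand_pos t : 0 < ell_integrand m t.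
Proof. apply Rinv_0_lt_compat, sqrt_lt_R0, ell_denom_pos. Qed.

Lemma ell_integrand_continuous t : continuous (ell_integrand m) t.
Proof.
  apply (@ex_derive_continuous R_AbsRing R_NormedModule).
  unfold ell_integrand. auto_derive.
  pose proof (ell_denom_pos t).
  repeat split; auto. apply Rgt_not_eq, sqrt_lt_R0; lra.
Qed.

Lemma ex_RInt_ell_integrand a b : ex_RInt (ell_integrand m) a b.
Proof.
  apply (@ex_RInt_continuous R_CompleteNormedModule).
  intros; apply ell_integrand_continuous.
Qed.

Lemma EllF_RInt phi : EllF m phi = RInt (ell_integrand m) 0 phi.
Proof.
  unfold EllF.
  set (P := fun v => exists pr : Riemann_integrable (ell_integrand m) 0 phi,
                       RiemannInt pr = v).
  assert (HP : P (epsilon (inhabits 0) P)).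
  { apply epsilon_spec.
    exists (RiemannInt (ex_RInt_Reals_0 _ _ _ (ex_RInt_ell_integrand 0 phi))).
    eexists; reflexivity. }
  destruct HP as [pr <-]. symmetry. apply RInt_Reals.
Qed.

Lemma EllF_sub a b : EllF m b - EllF m a = RInt (ell_integrand m) a b.
Proof.
  rewrite !EllF_RInt, <- (RInt_Chasles _ 0 a b) by apply ex_RInt_ell_integrand.
  unfold plus; simpl. ring.
Qed.

Lemma EllF_0 : EllF m 0 = 0.
Proof. rewrite EllF_RInt. now rewrite RInt_point. Qed.

Lemma EllF_lt a b : a < b -> EllF m a < EllF m b.
Proof.
  intro ab.
  assert (int_pos : 0 < RInt (ell_integrand m) a b).
  { apply RInt_gt_0; auto; intros.
    - apply ell_integrand_pos.
    - apply ell_integrand_continuous. }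
  rewrite <- EllF_sub in int_pos. lra.
Qed.

Lemma EllF_inj a b : EllF m a = EllF m b -> a = b.
Proof.
  intro Fab. destruct (Rtotal_order a b) as [ab | [ab | ab]]; auto;
    apply EllF_lt in ab; lra.
Qed.

Lemma EllF_continuous : continuity (EllF m).
Proof.
  intro x. apply continuity_pt_ext with (f := RInt (ell_integrand m) 0).
  { intro; symmetry; apply EllF_RInt. }
  apply continuity_pt_filterlim, (@ex_derive_continuous R_AbsRing R_NormedModule).
  eexists. apply is_derive_RInt with (a := 0).
  - apply filter_forall. intro y.
    apply (@RInt_correct R_CompleteNormedModule), ex_RInt_ell_integrand.
  - apply ell_integrand_continuous.
Qed.

Lemma EllK_pos : 0 < EllK m.
Proof. unfold EllK. rewrite <- EllF_0. apply EllF_lt. pose proof PI_RGT_0. lra. Qed.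

Lemma JacobiAm_eq u phi : EllF m phi = u -> JacobiAm m u = phi.
Proof.
  intro Fphi. apply EllF_inj. unfold JacobiAm.
  rewrite (epsilon_spec (inhabits 0) (fun p => EllF m p = u) (ex_intro _ _ Fphi)).
  now rewrite Fphi.
Qed.

Lemma ex_EllF_eq u : 0 < u < EllK m -> exists2 phi, 0 < phi < PI / 2 & EllF m phi = u.
Proof.
  intro u_bd. unfold EllK in u_bd. pose proof PI_RGT_0.
  destruct (IVT (fun x => EllF m x - u) 0 (PI / 2)) as [phi [phi_bd Fphi]].
  - apply continuity_minus; [apply EllF_continuous | apply continuity_const; now intros ??].
  - lra.
  - rewrite EllF_0. lra.
  - lra.
  - exists phi; [|lra].
    assert (phi <> 0) by (intros ->; rewrite EllF_0 in Fphi; lra).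
    assert (phi <> PI / 2) by (intros ->; lra).
    lra.
Qed.

Lemma JacobiAm_range u : 0 < u < EllK m -> 0 < JacobiAm m u < PI / 2.
Proof.
  intro u_bd. destruct (ex_EllF_eq u u_bd) as [phi ? Fphi].
  now rewrite (JacobiAm_eq u phi).
Qed.

Lemma EllF_JacobiAm u : 0 < u < EllK m -> EllF m (JacobiAm m u) = u.
Proof.
  intro u_bd. destruct (ex_EllF_eq u u_bd) as [phi ? Fphi].
  now rewrite (JacobiAm_eq u phi).
Qed.

Lemma rescaled_thetabar_bounds thetabar : 0 < thetabar < PI / 2 ->
  0 < 2 * EllK m / PI * thetabar < EllK m.
Proof.
  intro tb_bd. pose proof PI_RGT_0. pose proof EllK_pos. split.
  - apply Rmult_lt_0_compat; [apply Rdiv_lt_0_compat |]; lra.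
  - replace (EllK m) with (2 * EllK m / PI * (PI / 2)) at 2 by (field; lra).
    apply Rmult_lt_compat_l; [apply Rdiv_lt_0_compat |]; lra.
Qed.

End EllipticIntegral.

Definition imag_modulus_param (m : R) : R := - m / (1 - m).

Definition coupling_of_amplitude (phi : R) : R := / 2 * ln ((1 + sin phi) / cos phi).

Lemma Jcoupling_amplitude thetabar m :
  Jcoupling thetabar m = coupling_of_amplitude (JacobiAm m (2 * EllK m / PI * thetabar)).
Proof. reflexivity. Qed.

Section CouplingOfAmplitude.

Variable phi : R.
Hypothesis phi_bd : 0 < phi < PI / 2.

Let sin_pos : 0 < sin phi.
Proof. apply sin_gt_0; lra. Qed.

Let cos_pos : 0 < cos phi.
Proof. apply cos_gt_0; lra. Qed.

Let sin2_cos2_phi : sin phi ^ 2 + cos phi ^ 2 = 1.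
Proof. pose proof (sin2_cos2 phi) as E. unfold Rsqr in E. lra. Qed.

Lemma exp_2_coupling_of_amplitude :
  exp (2 * coupling_of_amplitude phi) = (1 + sin phi) / cos phi.
Proof.
  unfold coupling_of_amplitude.
  replace (2 * (/ 2 * _)) with (ln ((1 + sin phi) / cos phi)) by field.
  apply exp_ln, Rdiv_lt_0_compat; lra.
Qed.

Lemma sinh_2_coupling_of_amplitude : sinh (2 * coupling_of_amplitude phi) = tan phi.
Proof.
  unfold sinh, tan. rewrite exp_Ropp, exp_2_coupling_of_amplitude.
  field_simplify_eq; [nra | lra].
Qed.

End CouplingOfAmplitude.

Lemma tanh_coupling_of_amplitude phi : 0 < phi < PI / 2 ->
  tanh (coupling_of_amplitude phi) = exp (-2 * coupling_of_amplitude (PI / 2 - phi)).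
Proof.
  intro phi_bd.
  assert (0 < sin phi) by (apply sin_gt_0; lra).
  assert (0 < cos phi) by (apply cos_gt_0; lra).
  pose proof (sin2_cos2 phi) as E. unfold Rsqr in E.
  replace (-2 * _) with (- (2 * coupling_of_amplitude (PI / 2 - phi))) by ring.
  rewrite exp_Ropp, exp_2_coupling_of_amplitude, sin_shift, cos_shift by lra.
  set (z := coupling_of_amplitude phi).
  assert (ez2 : exp z * exp z = (1 + sin phi) / cos phi).
  { rewrite <- exp_plus, <- exp_2_coupling_of_amplitude by exact phi_bd.
    f_equal. unfold z. ring. }
  pose proof (exp_pos z).
  unfold tanh, sinh, cosh. rewrite exp_Ropp.
  field_simplify_eq; [| repeat split; nra].
  replace (exp z ^ 2) with ((1 + sin phi) / cos phi) by (rewrite <- ez2; ring).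
  field_simplify_eq; nra.
Qed.

Section ImaginaryModulus.

Variable m : R.
Hypothesis m_lt1 : m < 1.

Let mstar := imag_modulus_param m.
Let kprime := sqrt (1 - m).

Lemma imag_modulus_param_lt1 : mstar < 1.
Proof.
  unfold mstar, imag_modulus_param.
  apply Rmult_lt_reg_r with (1 - m); [lra |]. field_simplify; lra.
Qed.

Lemma ell_integrand_imag_modulus s :
  ell_integrand mstar (PI / 2 - s) = kprime * ell_integrand m s.
Proof.
  unfold ell_integrand, mstar, kprime, imag_modulus_param. rewrite sin_shift.
  pose proof (ell_denom_pos m m_lt1 s).
  replace (1 - - m / (1 - m) * cos s ^ 2) with ((1 - m * sin s ^ 2) / (1 - m)).
  2:{ pose proof (sin2_cos2 s) as E. unfold Rsqr in E.
      replace (cos s ^ 2) with (1 - sin s ^ 2) by nra. field. lra. }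
  assert (0 < sqrt (1 - m * sin s ^ 2)) by (apply sqrt_lt_R0; lra).
  assert (0 < sqrt (1 - m)) by (apply sqrt_lt_R0; lra).
  rewrite sqrt_div_alt by lra. field. lra.
Qed.

Lemma EllF_imag_modulus_complement phi :
  EllF mstar (PI / 2 - phi) = kprime * (EllK m - EllF m phi).
Proof.
  pose proof imag_modulus_param_lt1 as mstar_lt1.
  rewrite (EllF_RInt mstar) by exact mstar_lt1.
  unfold EllK. rewrite (EllF_sub m m_lt1).
  (* substitution [t = pi/2 - s] *)
  pose proof (RInt_comp_lin (ell_integrand mstar) (-1) (PI / 2) (PI / 2) phi
                (ex_RInt_ell_integrand mstar mstar_lt1 _ _)) as change_var.
  replace (-1 * (PI / 2) + PI / 2) with 0 in change_var by ring.
  replace (-1 * phi + PI / 2) with (PI / 2 - phi) in change_var by ring.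
  rewrite <- change_var, <- opp_RInt_swap, <- RInt_opp.
  - change (kprime * ?I) with (scal kprime I).
    rewrite <- RInt_scal by apply ex_RInt_ell_integrand, m_lt1.
    apply RInt_ext. intros s _.
    replace (-1 * s + PI / 2) with (PI / 2 - s) by ring.
    rewrite ell_integrand_imag_modulus.
    unfold scal, opp; simpl; unfold mult; simpl. ring.
  - apply ex_RInt_swap, (@ex_RInt_comp_lin R_CompleteNormedModule).
    apply ex_RInt_ell_integrand, mstar_lt1.
  - apply (@ex_RInt_comp_lin R_CompleteNormedModule).
    apply ex_RInt_ell_integrand, mstar_lt1.
Qed.

Lemma EllK_imag_modulus : EllK mstar = kprime * EllK m.
Proof.
  unfold EllK at 1. replace (PI / 2) with (PI / 2 - 0) at 1 by ring.
  rewrite EllF_imag_modulus_complement, EllF_0 by exact m_lt1. ring.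
Qed.

Lemma JacobiAm_imag_modulus_complement thetabar : 0 < thetabar < PI / 2 ->
  JacobiAm mstar (2 * EllK mstar / PI * (PI / 2 - thetabar))
  = PI / 2 - JacobiAm m (2 * EllK m / PI * thetabar).
Proof.
  intro tb_bd. pose proof PI_RGT_0.
  pose proof (rescaled_thetabar_bounds m m_lt1 thetabar tb_bd) as u_bd.
  apply JacobiAm_eq; [apply imag_modulus_param_lt1|].
  rewrite EllF_imag_modulus_complement, EllF_JacobiAm, EllK_imag_modulus by assumption.
  field. lra.
Qed.

Lemma Jcoupling_imag_modulus_complement thetabar : 0 < thetabar < PI / 2 ->
  Jcoupling (PI / 2 - thetabar) mstar
  = coupling_of_amplitude (PI / 2 - JacobiAm m (2 * EllK m / PI * thetabar)).
Proof.
  intro tb_bd. rewrite Jcoupling_amplitude. now rewrite JacobiAm_imag_modulus_complement.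
Qed.

Theorem sinh_Jcoupling_imag_modulus thetabar : 0 < thetabar < PI / 2 ->
  sinh (2 * Jcoupling thetabar m) * sinh (2 * Jcoupling (PI / 2 - thetabar) mstar) = 1.
Proof.
  intro tb_bd.
  pose proof (JacobiAm_range m m_lt1 _ (rescaled_thetabar_bounds m m_lt1 _ tb_bd)).
  rewrite Jcoupling_imag_modulus_complement, Jcoupling_amplitude by exact tb_bd.
  rewrite !sinh_2_coupling_of_amplitude by lra.
  unfold tan. rewrite sin_shift, cos_shift.
  assert (0 < sin (JacobiAm m (2 * EllK m / PI * thetabar))) by (apply sin_gt_0; lra).
  assert (0 < cos (JacobiAm m (2 * EllK m / PI * thetabar))) by (apply cos_gt_0; lra).
  field. lra.
Qed.

Theorem tanh_Jcoupling_imag_modulus thetabar : 0 < thetabar < PI / 2 ->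
  tanh (Jcoupling thetabar m) = exp (-2 * Jcoupling (PI / 2 - thetabar) mstar).
Proof.
  intro tb_bd.
  rewrite Jcoupling_imag_modulus_complement, Jcoupling_amplitude by exact tb_bd.
  apply tanh_coupling_of_amplitude, JacobiAm_range, rescaled_thetabar_bounds; assumption.
Qed.

End ImaginaryModulus.

From mathcomp Require Import all_boot.

Lemma ht_weight_imag_modulus {m : R} {E : finType} {theta : E -> R} :
  m < 1 -> (forall e, 0 < theta e < PI / 2) ->
  ht_weight theta m = lt_dual_weight theta (imag_modulus_param m).
Proof.
  move=> m_lt1 theta_bd; apply: functional_extensionality => S.
  apply: eq_bigr => e _; exact: tanh_Jcoupling_imag_modulus.
Qed.

Theorem mainTheorem11 :
  forall k : R, 0 <= k -> k < 1 ->
    (forall thetabar : R, 0 < thetabar -> thetabar < PI / 2 ->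
       sinh (2 * Jcoupling thetabar (k ^ 2)) *
       sinh (2 * Jcoupling (PI / 2 - thetabar) (- k ^ 2 / (1 - k ^ 2))) = 1)
    /\
    (forall (V E : finType) (ends : E -> V * V) (theta : E -> R),
       (forall e, 0 < theta e /\ theta e < PI / 2) ->
       forall S : {set E}, polygon_config ends S ->
         polygon_measure ends (ht_weight theta (k ^ 2)) S =
         polygon_measure ends (lt_dual_weight theta (- k ^ 2 / (1 - k ^ 2))) S).
Proof.
  move=> k k_ge0 k_lt1.
  have m_lt1 : k ^ 2 < 1 by nra.
  split.
  - move=> thetabar tb_gt0 tb_lt; exact: sinh_Jcoupling_imag_modulus.
  - move=> V E ends theta theta_bd S _.
    by rewrite (ht_weight_imag_modulus m_lt1 theta_bd).
Qed.
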